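(* Let $R$ be a commutative ring and $S$ a multiplicative subset of $R$. The following are equivalent: (1) $R$ is a $u$-$S$-semisimple ring; (2) every $R$-module is $u$-$S$-semisimple; (3) every $u$-$S$-exact sequence $0\to A\to B\to C\to0$ is $u$-$S$-split; (4) every short exact sequence of $R$-modules is $u$-$S$-split; (5) $\mathrm{Ext}^1_R(M,N)$ is $u$-$S$-torsion for all $R$-modules $M,N$; (6) every $R$-module is $u$-$S$-projective; (7) every $R$-module is $u$-$S$-injective.
   Context: An $R$-module $T$ is $u$-$S$-torsion if $sT=0$ for some $s\in S$. A sequence $M\xrightarrow{f}N\xrightarrow{g}L$ is $u$-$S$-exact at $N$ if there is $s\in S$ with $s\,\mathrm{Ker}(g)\subseteq\mathrm{Im}(f)$ and $s\,\mathrm{Im}(f)\subseteq\mathrm{Ker}(g)$; a short sequence $0\to A\xrightarrow{f}B\xrightarrow{g}C\to0$ is $u$-$S$-exact if $u$-$S$-exact at each term, and it is $u$-$S$-split if there exist $s\in S$ and an $R$-homomorphism $h:B\to A$ with $h\circ f=s\,\mathrm{Id}_A$. An $R$-module $M$ is $u$-$S$-semisimple if every $u$-$S$-exact sequence $0\to A\to M\to C\to0$ is $u$-$S$-split. $R$ is a $u$-$S$-semisimple ring if every free $R$-module is $u$-$S$-semisimple. An $R$-module $P$ is $u$-$S$-projective if $\mathrm{Ext}^1_R(P,M)$ is $u$-$S$-torsion for all $M$; $E$ is $u$-$S$-injective if $\mathrm{Ext}^1_R(M,E)$ is $u$-$S$-torsion for all $M$. *)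

From HB Require Import structures.
From mathcomp Require Import all_boot all_order all_algebra.
Set Implicit Arguments. Unset Strict Implicit. Unset Printing Implicit Defensive.
Import GRing.Theory.
Local Open Scope ring_scope.

Definition mult_subset (R : comPzRingType) (S : {pred R}) : Prop :=
  1 \in S /\ (forall a b, a \in S -> b \in S -> a * b \in S).

Section USDefs.
Variables (R : comPzRingType) (S : {pred R}).

Definition uS_exact_at (M N L : lmodType R) (f : M -> N) (g : N -> L) : Prop :=
  exists2 s, s \in S &
    (forall n, g n = 0 -> exists m, f m = s *: n) /\
    (forall m, g (s *: f m) = 0).

(* 0 -> A --f--> B --g--> C -> 0 is u-S-exact: u-S-exact at A, B and C.
   At A: s Ker f <= Im 0 = 0 (the other inclusion is trivial).
   At C: s Ker (C -> 0) = s C <= Im g (the other inclusion is trivial). *)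
Definition uS_exact_short (A B C : lmodType R)
    (f : {linear A -> B}) (g : {linear B -> C}) : Prop :=
  [/\ (exists2 s, s \in S & forall a, f a = 0 -> s *: a = 0),
      uS_exact_at f g &
      (exists2 s, s \in S & forall c, exists b, g b = s *: c)].

Definition uS_split (A B C : lmodType R)
    (f : {linear A -> B}) (g : {linear B -> C}) : Prop :=
  exists2 s, s \in S &
    exists h : {linear B -> A}, forall a, h (f a) = s *: a.

Definition uS_semisimple (M : lmodType R) : Prop :=
  forall (A C : lmodType R) (f : {linear A -> M}) (g : {linear M -> C}),
    uS_exact_short f g -> uS_split f g.

Definition short_exact (A B C : lmodType R)
    (f : {linear A -> B}) (g : {linear B -> C}) : Prop :=
  [/\ injective f,
      (forall b, g b = 0 <-> exists a, f a = b) &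
      (forall c, exists b, g b = c)].

Definition free_module (M : lmodType R) : Prop :=
  exists Bs : {pred M},
    (forall m, exists2 l : seq M, all (mem Bs) l &
       exists c : M -> R, m = \sum_(x <- l) c x *: x) /\
    (forall (l : seq M) (c : M -> R), uniq l -> all (mem Bs) l ->
       \sum_(x <- l) c x *: x = 0 -> forall x, x \in l -> c x = 0).

Definition uS_semisimple_ring : Prop :=
  forall F : lmodType R, free_module F -> uS_semisimple F.

Definition projective (P : lmodType R) : Prop :=
  forall (B C : lmodType R) (g : {linear B -> C}) (phi : {linear P -> C}),
    (forall c, exists b, g b = c) ->
    exists psi : {linear P -> B}, forall x, g (psi x) = phi x.

(* s annihilates Ext^1_R(M, N), computed from a projective presentation
   0 -> K --i--> P --p--> M -> 0:
   Ext^1_R(M,N) = Hom(K,N) / restriction(Hom(P,N)), so s Ext^1 = 0 iff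
   s*phi extends to P for every phi : K -> N.  (Independent of the
   presentation; we require it for every projective presentation.) *)
Definition Ext1_annihilated_by (s : R) (M N : lmodType R) : Prop :=
  forall (K P : lmodType R) (i : {linear K -> P}) (p : {linear P -> M}),
    projective P -> short_exact i p ->
    forall phi : {linear K -> N},
      exists psi : {linear P -> N}, forall k, psi (i k) = s *: phi k.

Definition Ext1_uS_torsion (M N : lmodType R) : Prop :=
  exists2 s, s \in S & Ext1_annihilated_by s M N.

Definition uS_projective (P : lmodType R) : Prop :=
  forall M : lmodType R, Ext1_uS_torsion P M.

Definition uS_injective (E : lmodType R) : Prop :=
  forall M : lmodType R, Ext1_uS_torsion M E.

End USDefs.

(* Let F_M -> M be the free module on the elements of M, sending each
   generator to itself, and K_M its kernel.  If K_M -> F_M has a retraction up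
   to s in S, the resulting section up to s of F_M -> M lifts along any
   epimorphism P -> M with kernel K; a section up to s of P -> M yields a
   retraction up to s of K -> P, through which s * phi extends to P for every
   phi : K -> N.  So s annihilates Ext^1(M, -).
   Conversely, let s kill Ext^1(C, A) and 0 -> A -> B -> C -> 0 be u-S-exact.
   A lift F_C -> B of (a multiple of) F_C -> C maps K_C into A up to S;
   extending that map from K_C to F_C and subtracting gives a map vanishing on
   K_C, which descends to a section of B -> C up to an element of S, and such a
   section produces a retraction of A -> B up to an element of S.  As F_M is
   free and projective, the seven conditions close up in a cycle. *)

From HB Require Import structures.
From mathcomp Require Import all_boot all_order all_algebra.
From mathcomp Require Import finmap monalg.
Set Implicit Arguments. Unset Strict Implicit. Unset Printing Implicit Defensive.
Import GRing.Theory.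
Local Open Scope ring_scope.

Section LinearOfProof.
Variables (R : pzRingType) (U V : lmodType R) (f : U -> V).
Hypothesis f_lin : linear f.
Definition linmap_fun := f.
HB.instance Definition _ := GRing.isLinear.Build R U V *:%R linmap_fun f_lin.
Definition linmap : {linear U -> V} := linmap_fun.
Lemma linmapE u : linmap u = f u. Proof. by []. Qed.
End LinearOfProof.

Section Homothety.
Variables (R : comPzRingType) (U : lmodType R) (a : R).
Lemma homothety_is_linear : linear (fun u : U => a *: u).
Proof. by move=> b u v; rewrite scalerDr !scalerA mulrC. Qed.
Definition homothety : {linear U -> U} := linmap homothety_is_linear.
Lemma homothetyE u : homothety u = a *: u. Proof. by []. Qed.
End Homothety.

Section Kernel.
Variables (R : pzRingType) (B C : lmodType R) (p : {linear B -> C}).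
Definition ker_pred : {pred B} := fun b => p b == 0.
Lemma ker_submod_closed : submod_closed ker_pred.
Proof.
split=> [|a x y]; rewrite !unfold_in /= ?linear0 //.
by rewrite linearP => /eqP-> /eqP->; rewrite scaler0 addr0.
Qed.
HB.instance Definition _ :=
  GRing.isSubmodClosed.Build R B ker_pred ker_submod_closed.
Inductive kermod : predArgType := Kermod b of b \in ker_pred.
Definition kermod_val (k : kermod) := let: Kermod b _ := k in b.
HB.instance Definition _ := [isSub of kermod for kermod_val].
HB.instance Definition _ := [Choice of kermod by <:].
HB.instance Definition _ := [SubChoice_isSubZmodule of kermod by <:].
HB.instance Definition _ := [SubZmodule_isSubLmodule of kermod by <:].
Definition kerincl : {linear kermod -> B} := val.

Lemma kerincl0 k : p (kerincl k) = 0.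
Proof. exact/eqP/(valP k). Qed.

Lemma kerinclP b : p b = 0 <-> exists k, kerincl k = b.
Proof.
split=> [pb0|[[b' /eqP pb'0] <-] //].
have kb : b \in ker_pred by apply/eqP.
by exists (Kermod kb).
Qed.
End Kernel.

Section Factorization.
Variables (R : comPzRingType) (A B C : lmodType R).

Lemma lift_through_torsion_kernel (X : lmodType R) (f : {linear A -> B})
    (y : {linear X -> B}) (s s' : R) :
  (forall a, f a = 0 -> s *: a = 0) -> (forall x, exists a, f a = s' *: y x) ->
  exists q : {linear X -> A}, forall x, f (q x) = (s * s') *: y x.
Proof.
move=> ker_f img_y.
have pre x : exists a, f a == s' *: y x by have [a <-] := img_y x; exists a.
pose c x := xchoose (pre x).
have fc x : f (c x) = s' *: y x by apply/eqP/(xchooseP (pre x)).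
have q_lin : linear (fun x => s *: c x).
  move=> a x x'; apply/eqP; rewrite scalerA mulrC -scalerA -scalerDr -subr_eq0.
  rewrite -scalerBr ker_f // linearB linearP /= !fc.
  by rewrite linearP /= scalerDr !scalerA mulrC subrr.
by exists (linmap q_lin) => x; rewrite /= linearZ_LR fc scalerA.
Qed.

Lemma factor_through_surjection (V : lmodType R) (p : {linear B -> C})
    (th : {linear B -> V}) :
  (forall c, exists b, p b = c) -> (forall b, p b = 0 -> th b = 0) ->
  exists th' : {linear C -> V}, forall b, th' (p b) = th b.
Proof.
move=> surj_p ker_th.
have pre (c : C) : exists b : B, p b == c by have [b <-] := surj_p c; exists b.
pose c' (c : C) : B := xchoose (pre c).
have pc' c : p (c' c) = c by apply/eqP/(xchooseP (pre c)).
have th'_lin : linear (fun c => th (c' c)).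
  move=> a c1 c2 /=; apply/eqP; rewrite -subr_eq0.
  have /eqP : th (c' (a *: c1 + c2) - (a *: c' c1 + c' c2)) = 0.
    by apply: ker_th; rewrite linearB linearP !pc' subrr.
  by rewrite linearB linearP.
exists (linmap th'_lin) => b /=; apply/eqP; rewrite -subr_eq0.
have /eqP : th (c' (p b) - b) = 0 by apply: ker_th; rewrite linearB pc' subrr.
by rewrite linearB.
Qed.
End Factorization.

Section FreeModule.
Variables (R : pzRingType) (K : choiceType).

(* monalg makes {malg R[K]} a module only over nonzero rings. *)
Definition freemod := malg K R.
HB.instance Definition _ := GRing.Zmodule.on freemod.

Definition freemod_scale (c : R) (g : freemod) : freemod :=
  [malg k in msupp g => c * g@_k].

Lemma freemod_scaleE c g k : (freemod_scale c g)@_k = c * g@_k.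
Proof. by rewrite mcoeffE; case: msuppP; rewrite ?mulr0. Qed.

Lemma freemod_scaleA c d g :
  freemod_scale c (freemod_scale d g) = freemod_scale (c * d) g.
Proof. by apply/malgP=> k; rewrite !freemod_scaleE mulrA. Qed.

Lemma freemod_scale1 : left_id 1 freemod_scale.
Proof. by move=> g; apply/malgP=> k; rewrite freemod_scaleE mul1r. Qed.

Lemma freemod_scaleDr c : {morph freemod_scale c : g h / g + h}.
Proof.
by move=> g h; apply/malgP=> k; rewrite !(mcoeffD, freemod_scaleE) mulrDr.
Qed.

Lemma freemod_scaleDl g : {morph freemod_scale^~ g : c d / c + d}.
Proof.
by move=> c d; apply/malgP=> k; rewrite !(mcoeffD, freemod_scaleE) mulrDl.
Qed.

HB.instance Definition _ := GRing.Zmodule_isLmodule.Build R freemod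
  freemod_scaleA freemod_scale1 freemod_scaleDr freemod_scaleDl.

Lemma freemodZ c (g : freemod) k : (c *: g)@_k = c * g@_k.
Proof. exact: freemod_scaleE. Qed.

Definition fbasis k : freemod := << 1 *g k >>.

Lemma fbasisE k k' : (fbasis k)@_k' = (k == k')%:R.
Proof. exact: mcoeffU. Qed.

Lemma fbasis_inj : (1 : R) != 0 -> injective fbasis.
Proof.
move=> nz k k' /(congr1 (mcoeff k)); rewrite !fbasisE eqxx.
by case: eqP => // _ /eqP; rewrite (negbTE nz).
Qed.

Lemma msupp_fbasis k : (1 : R) != 0 -> msupp (fbasis k) = [fset k]%fset.
Proof. by move=> nz; rewrite msuppU (negbTE nz). Qed.

Lemma freemod_expand (g : freemod) : g = \sum_(k <- msupp g) g@_k *: fbasis k.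
Proof.
rewrite {1}[g]monalgE; apply: eq_bigr => k _; apply/malgP => k'.
by rewrite freemodZ fbasisE mcoeffU mulr_natr.
Qed.

Section Lift.
Local Open Scope fset_scope.
Variables (N : lmodType R) (u : K -> N).

Definition freemod_lift_fun (g : freemod) := \sum_(k <- msupp g) g@_k *: u k.

Lemma freemod_lift_funEw (g : freemod) (D : {fset K}) : msupp g `<=` D ->
  freemod_lift_fun g = \sum_(k <- D) g@_k *: u k.
Proof.
by move=> sub; apply: big_fset_incl => // k _ /mcoeff_outdom->; rewrite scale0r.
Qed.

Lemma freemod_lift_is_linear : linear freemod_lift_fun.
Proof.
move=> a g h; pose D := msupp g `|` msupp h.
have suppZD : msupp (a *: g + h) `<=` D.
  apply: fsubset_trans (msuppD_le _ _) (fsetSU _ _).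
  apply/fsubsetP=> k; rewrite -!mcoeff_neq0 freemodZ.
  by apply: contraNneq => ->; rewrite mulr0.
rewrite (freemod_lift_funEw suppZD) (freemod_lift_funEw (fsubsetUl _ (msupp h))).
rewrite (freemod_lift_funEw (fsubsetUr (msupp g) _)) scaler_sumr -big_split.
by apply: eq_bigr => k _; rewrite mcoeffD freemodZ scalerDl scalerA.
Qed.

Definition freemod_lift : {linear freemod -> N} :=
  linmap freemod_lift_is_linear.

Lemma freemod_liftE k : freemod_lift (fbasis k) = u k.
Proof.
rewrite linmapE (freemod_lift_funEw msuppU_le) big_seq_fset1.
by rewrite fbasisE eqxx scale1r.
Qed.
End Lift.

Lemma freemod_linear_ext (N : lmodType R) (F G : {linear freemod -> N}) :
  (forall k, F (fbasis k) = G (fbasis k)) -> F =1 G.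
Proof.
move=> FG g; rewrite (freemod_expand g) !linear_sum; apply: eq_bigr => k _.
by rewrite !linearZ /= FG.
Qed.
End FreeModule.

Section FreeModuleProperties.
Variables (R : comPzRingType) (K : choiceType).

Lemma freemod_lift_along (B C : lmodType R) (g : {linear B -> C})
    (phi : {linear freemod R K -> C}) :
  (forall k, exists b, g b = phi (fbasis R k)) ->
  exists psi : {linear freemod R K -> B}, forall x, g (psi x) = phi x.
Proof.
move=> img; have pre k : exists b, g b == phi (fbasis R k).
  by have [b <-] := img k; exists b.
exists (freemod_lift (fun k => xchoose (pre k))).
apply: (freemod_linear_ext (F := g \o freemod_lift _)) => k /=.
by rewrite freemod_liftE; apply/eqP/(xchooseP (pre k)).
Qed.

Lemma freemod_projective : projective (freemod R K).
Proof.
move=> B C g phi surj_g; apply: freemod_lift_along => k; exact: surj_g.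
Qed.

Lemma freemod_free : free_module (freemod R K).
Proof.
have nz_of_supp (g : freemod R K) k : k \in msupp g -> (1 : R) != 0.
  by apply: contraTneq => z; rewrite -mcoeff_eq0 -[g@_k]mulr1 z mulr0.
exists (fun y : freemod R K => [exists k : msupp y, y == fbasis R (val k)]).
split.
- move=> m; exists [seq fbasis R k | k <- msupp m].
    apply/allP=> _ /mapP [k km ->]; apply/existsP.
    have kk : k \in msupp (fbasis R k).
      by rewrite msupp_fbasis ?fset11 ?(nz_of_supp m k).
    by exists [` kk]%fset.
  exists (fun y => \sum_(k <- msupp y) m@_k).
  rewrite big_map {1}(freemod_expand m); apply: eq_big_seq => k km.
  by rewrite msupp_fbasis ?(nz_of_supp m k) // big_seq_fset1.
- move=> l c ul /allP l_basis sum0 x xl.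
  have /existsP [[k /= kx] /eqP xk] := l_basis x xl.
  have coef_k y : y \in l -> y@_k = (y == x)%:R.
    move=> yl; have /existsP [[k' /= _] /eqP ->] := l_basis y yl.
    by rewrite xk fbasisE (inj_eq (fbasis_inj (nz_of_supp x k kx))).
  move/(congr1 (mcoeff k)): sum0; rewrite mcoeff0 raddf_sum (bigD1_seq x) //=.
  rewrite freemodZ coef_k // eqxx mulr1 big1_seq ?addr0 // => y /andP [yx yl].
  by rewrite freemodZ coef_k // (negbTE yx) mulr0.
Qed.
End FreeModuleProperties.

Section Presentation.
Variables (R : comPzRingType) (M : lmodType R).

Definition pres : {linear freemod R M -> M} := freemod_lift id.

Definition pres_ker : {linear kermod pres -> freemod R M} := kerincl pres.

Lemma pres_surj m : exists x, pres x = m.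
Proof. by exists (fbasis R m); rewrite freemod_liftE. Qed.

Lemma pres_exact : short_exact pres_ker pres.
Proof. by split; [exact: val_inj | exact: kerinclP | exact: pres_surj]. Qed.
End Presentation.

Section Splitting.
Variables (R : comPzRingType) (A B C : lmodType R).
Implicit Types (f : {linear A -> B}) (g : {linear B -> C}).

(* [uS_exact_short] with explicit witnesses: the annihilator of Ext^1 must not
   depend on the presentation, so the constants are tracked. *)
Definition exact_upto (s1 s2 s3 : R) f g : Prop :=
  [/\ forall a, f a = 0 -> s1 *: a = 0,
      forall b, g b = 0 -> exists a, f a = s2 *: b,
      forall a, g (s2 *: f a) = 0 &
      forall c, exists b, g b = s3 *: c].

Lemma short_exact_upto1 f g : short_exact f g -> exact_upto 1 1 1 f g.
Proof.
case=> inj_f ker_g surj_g; split.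
- by move=> a fa0; rewrite scale1r; apply: inj_f; rewrite fa0 linear0.
- by move=> b /ker_g [a <-]; exists a; rewrite scale1r.
- by move=> a; rewrite scale1r; apply/ker_g; exists a.
- by move=> c; rewrite scale1r.
Qed.

Lemma section_of_retraction f g (h : {linear B -> A}) (s : R) :
  short_exact f g -> (forall a, h (f a) = s *: a) ->
  exists sigma : {linear C -> B}, forall c, g (sigma c) = s *: c.
Proof.
case=> _ ker_g surj_g hf.
have ker_th b : g b = 0 -> (homothety B s \- (f \o h : B -> B)) b = 0.
  by move=> /ker_g [a <-]; rewrite /= hf linearZ subrr.
have [sigma sigma_g] := factor_through_surjection surj_g ker_th.
exists sigma => c; have [b <-] := surj_g c.
have gf a : g (f a) = 0 by apply/ker_g; exists a.
by rewrite sigma_g /= linearB linearZ gf subr0.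
Qed.

Lemma retraction_of_section (s1 s2 s3 t : R) f g (tau : {linear C -> B}) :
  exact_upto s1 s2 s3 f g -> (forall c, g (tau c) = t *: c) ->
  exists h : {linear B -> A}, forall a, h (f a) = (s1 * s1 * s2 * t) *: a.
Proof.
case=> ker_f ker_g gf _ g_tau.
pose y : {linear B -> B} := homothety B t \- (tau \o g : B -> B).
have g_y b : g (y b) = 0 by rewrite /= linearB linearZ g_tau subrr.
have [q fq] := lift_through_torsion_kernel ker_f (fun b => ker_g _ (g_y b)).
have s2_tau_gf a : s2 *: tau (g (f a)) = 0.
  by rewrite -linearZ_LR -linearZ_LR gf linear0.
exists (homothety A s1 \o q) => a /=.
apply/eqP; rewrite -!mulrA -scalerA -subr_eq0 -scalerBr; apply/eqP/ker_f.
rewrite linearB linearZ fq /= homothetyE scalerBr -[(s1 * s2) *: tau _]scalerA.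
by rewrite s2_tau_gf scaler0 subr0 scalerA mulrA subrr.
Qed.
End Splitting.

Section Ext1.
Variable R : comPzRingType.

Lemma Ext1_annihilated_of_split_presentation (M : lmodType R) (s : R)
    (h : {linear freemod R M -> kermod (pres M)}) :
  (forall k, h (pres_ker M k) = s *: k) -> forall N, Ext1_annihilated_by s M N.
Proof.
move=> h_split N K P i p _ exact_ip phi.
have [sigma0 pres_sigma0] := section_of_retraction (pres_exact M) h_split.
have [_ _ surj_p] := exact_ip.
have [lam p_lam] := freemod_projective (pres M) surj_p.
have p_sigma m : p ((lam \o sigma0) m) = s *: m by rewrite /= p_lam pres_sigma0.
have [q q_i] := retraction_of_section (short_exact_upto1 exact_ip) p_sigma.
by exists (phi \o q) => k; rewrite /= q_i !mul1r linearZ_LR.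
Qed.

Lemma section_of_Ext1_annihilated (A B C : lmodType R) (f : {linear A -> B})
    (g : {linear B -> C}) (s s1 s2 s3 : R) :
  Ext1_annihilated_by s C A -> exact_upto s1 s2 s3 f g ->
  exists tau : {linear C -> B},
    forall c, g (tau c) = (s2 * (s * s1 * s2 * s3)) *: c.
Proof.
move=> ext [ker_f ker_g gf img_g].
have [ps g_ps] : exists ps : {linear freemod R C -> B},
    forall x, g (ps x) = s3 *: pres C x.
  apply: (freemod_lift_along (phi := homothety C s3 \o pres C)) => c.
  by rewrite /= homothetyE freemod_liftE; exact: img_g.
have ker_ps k : g (ps (pres_ker C k)) = 0 by rewrite g_ps kerincl0 scaler0.
have [phi f_phi] := lift_through_torsion_kernel (y := ps \o pres_ker C) ker_f
  (fun k => ker_g _ (ker_ps k)).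
have [psi psi_ker] := ext _ _ _ _ (@freemod_projective R C) (pres_exact C) phi.
pose th : {linear freemod R C -> B} :=
  (homothety B (s * s1 * s2) \o ps : _ -> B) \- (f \o psi : _ -> B).
have ker_th x : pres C x = 0 -> th x = 0.
  move=> /kerinclP [k <-].
  by rewrite /= homothetyE psi_ker linearZ_LR f_phi scalerA mulrA subrr.
have [tau0 tau0_pres] := factor_through_surjection (@pres_surj _ C) ker_th.
exists (homothety B s2 \o tau0) => c; have [x <-] := pres_surj c.
rewrite /= homothetyE tau0_pres /= homothetyE scalerBr linearB gf subr0.
by rewrite linearZ_LR linearZ_LR g_ps !scalerA !mulrA.
Qed.
End Ext1.

Section MultiplicativeSubset.
Variables (R : comPzRingType) (S : {pred R}).
Hypothesis S_mult : mult_subset S.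

Lemma uS_exact_short_of_exact (A B C : lmodType R) (f : {linear A -> B})
    (g : {linear B -> C}) :
  short_exact f g -> uS_exact_short S f g.
Proof.
case: S_mult => S1 _ /short_exact_upto1 [ker_f ker_g gf img_g].
by split; [exists 1 | exists 1 | exists 1].
Qed.

Lemma uS_split_of_Ext1_uS_torsion (A B C : lmodType R) (f : {linear A -> B})
    (g : {linear B -> C}) :
  Ext1_uS_torsion S C A -> uS_exact_short S f g -> uS_split S f g.
Proof.
case: S_mult => _ SM [s Ss ext].
case=> [[s1 Ss1 ker_f] [s2 Ss2 [ker_g gf]] [s3 Ss3 img_g]].
have exact_fg : exact_upto s1 s2 s3 f g by [].
have [tau g_tau] := section_of_Ext1_annihilated ext exact_fg.
have [h h_f] := retraction_of_section exact_fg g_tau.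
by exists (s1 * s1 * s2 * (s2 * (s * s1 * s2 * s3))); [rewrite !SM | exists h].
Qed.

Lemma Ext1_uS_torsion_of_split_presentation (M : lmodType R) :
  uS_split S (pres_ker M) (pres M) -> forall N, Ext1_uS_torsion S M N.
Proof.
case=> s Ss [h h_split] N; exists s => //.
exact: Ext1_annihilated_of_split_presentation h_split N.
Qed.
End MultiplicativeSubset.

Theorem theorem3p5 (R : comPzRingType) (S : {pred R}) :
  mult_subset S ->
  [<-> uS_semisimple_ring S;
       forall M : lmodType R, uS_semisimple S M;
       forall (A B C : lmodType R) (f : {linear A -> B}) (g : {linear B -> C}),
         uS_exact_short S f g -> uS_split S f g;
       forall (A B C : lmodType R) (f : {linear A -> B}) (g : {linear B -> C}),
         short_exact f g -> uS_split S f g;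
       forall M N : lmodType R, Ext1_uS_torsion S M N;
       forall P : lmodType R, uS_projective S P;
       forall E : lmodType R, uS_injective S E].
Proof.
move=> S_mult; tfae.
- move=> ss_ring M A C f g; apply: uS_split_of_Ext1_uS_torsion => //.
  apply: Ext1_uS_torsion_of_split_presentation.
  exact: ss_ring _ (@freemod_free _ C) _ _ _ _
    (uS_exact_short_of_exact S_mult (pres_exact C)).
- by move=> ss_all A B C f g; apply: ss_all.
- move=> split_uS A B C f g /(uS_exact_short_of_exact S_mult).
  exact: split_uS.
- move=> split_exact M N; apply: Ext1_uS_torsion_of_split_presentation.
  exact: split_exact (pres_exact M).
- by move=> Ext1_all P M; apply: Ext1_all.
- by move=> uS_proj E M; apply: uS_proj.
- move=> uS_inj F _ A C f g.
  by apply: uS_split_of_Ext1_uS_torsion => //; apply: uS_inj.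
Qed.
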